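(* Let $p+q=4k$ with $k\ge1$. (i) If $p,q$ are even, $p\ge2$ and $q\ge6$, then $\mathbb{O}_{p,q}\simeq\mathbb{O}_{p+4,q-4}$. (ii) If $p,q$ are odd, $p\ge1$ and $q\ge3$, then $\mathbb{O}_{p,q}\simeq\mathbb{O}_{p+2,q-2}$. (The isomorphisms preserve the $\mathbb{Z}_2^n$-graded structure.)
   Context: $\mathbb{Z}_2=\{0,1\}$. For $p+q=n\ge3$, $\mathbb{O}_{p,q}$ is the real algebra with basis $\{u_x: x\in\mathbb{Z}_2^n\}$ and product $u_x\cdot u_y=(-1)^{f(x,y)}u_{x+y}$, where $f(x,y)=\sum_{1\le i<j<k\le n}(x_ix_jy_k+x_iy_jx_k+y_ix_jx_k)+\sum_{1\le i\le j\le n}x_iy_j+\sum_{1\le i\le p}x_iy_i$. Homogeneous elements are scalar multiples of some $u_x$. *)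

From HB Require Import structures.
From mathcomp Require Import all_boot all_order all_algebra.
From mathcomp Require Import reals.
Set Implicit Arguments. Unset Strict Implicit. Unset Printing Implicit Defensive.
Import Order.TTheory GRing.Theory Num.Theory.
Local Open Scope ring_scope.

(* The grading group Z_2^n, as boolean vectors indexed by 'I_n
   (coordinate i of the paper corresponds to the ordinal i-1). *)
Notation grade n := {ffun 'I_n -> bool}.

Definition gadd (n : nat) (x y : grade n) : grade n := [ffun i => x i (+) y i].

(* The cubic function f of the paper (value in nat; only its parity matters):
   f(x,y) = sum_{i<j<k} (x_i x_j y_k + x_i y_j x_k + y_i x_j x_k)
          + sum_{i<=j} x_i y_j + sum_{i<=p} x_i y_i. *)
Definition fcub (n p : nat) (x y : grade n) : nat :=
  (\sum_(i < n) \sum_(j < n) \sum_(k < n)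
      nat_of_bool ((i < j) && (j < k)) *
      (nat_of_bool [&& x i, x j & y k] + nat_of_bool [&& x i, y j & x k]
       + nat_of_bool [&& y i, x j & x k]))
  + (\sum_(i < n) \sum_(j < n) nat_of_bool ((i <= j) && (x i && y j)))
  + (\sum_(i < n) nat_of_bool ((i < p) && (x i && y i)))%N.

(* Elements of the real algebra O_{p,q} (n = p + q): real coordinates on the
   basis (u_x)_{x in Z_2^n}. *)
Notation elt R n := {ffun grade n -> (R : realType)^o}.

Definition ubasis (R : realType) (n : nat) (x : grade n) : elt R n :=
  [ffun z => (z == x)%:R].

Definition omul (R : realType) (n p : nat) (a b : elt R n) : elt R n :=
  \sum_(x : grade n) \sum_(y : grade n)
     (((-1) ^+ fcub p x y) * a x * b y) *: ubasis R (gadd x y).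

Definition homogeneous (R : realType) (n : nat) (a : elt R n) : Prop :=
  exists (x : grade n) (c : R), a = c *: ubasis R x.

Definition graded_iso (R : realType) (n p1 p2 : nat) : Prop :=
  exists phi : elt R n -> elt R n,
    [/\ (forall (c : R) (u v : elt R n), phi (c *: u + v) = c *: phi u + phi v),
        bijective phi,
        (forall a b : elt R n, phi (omul p1 a b) = omul p2 (phi a) (phi b)) &
        (forall a : elt R n, homogeneous a -> homogeneous (phi a))].

(* Only the parity of the exponent f matters, and modulo 2 it is the cocycle
     c_P(x,y) = |y| e2(x) + (1 + |x|) <x,y> + sum_(i <= j) x_i y_j + sum_(i in P) x_i y_i
   with P = [0, p): for each pair i < j with x_i = x_j = 1, the triple sum of f counts
   the indices k outside {i, j} with y_k = 1.  A linear involution s of Z_2^n and a map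
   g with c_P'(s x, s y) = c_P(x, y) + g x + g y + g (x + y) yield the graded isomorphism
   u_x |-> (-1)^(g x) u_(s x).  We use transvections s x = x + <S, x> A with <S, A> and
   |A| even.  The bilinear part of the cocycle then changes from P to P' = P + S up to a
   coboundary as soon as |P' /\ A| is odd, and the cubic part is compatible in two cases:
   S = A with C(|A|, 2) odd, and A = (1, ..., 1) with 4 | n.  Two transvections of the
   first kind, along [p-1, p+5) and {p-1, p+4}, take [0, p) to [0, p+4); one of the
   second kind, along S = {p, p+1}, takes [0, p) to [0, p+2) when p is odd. *)

From HB Require Import structures.
From mathcomp Require Import all_boot all_order all_algebra.
From mathcomp Require Import reals.
From mathcomp Require Import ring zify.
Set Implicit Arguments. Unset Strict Implicit. Unset Printing Implicit Defensive.
Import Order.TTheory GRing.Theory Num.Theory.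

Lemma odd_sum (I : finType) (F : I -> nat) :
  odd (\sum_i F i) = \big[addb/false]_i odd (F i).
Proof. by apply: (big_morph odd) => //; exact: oddD. Qed.

Lemma big_addb_pred1 (I : finType) (j : I) (F : I -> bool) :
  \big[addb/false]_i ((i == j) && F i) = F j.
Proof.
rewrite -(big_pred1_eq addb j F) big_mkcond; apply: eq_bigr => i _.
by case: (i == j).
Qed.

Lemma big_addb3_split (I : finType) (F G H : I -> I -> I -> bool) :
  \big[addb/false]_i \big[addb/false]_j \big[addb/false]_k (F i j k (+) G i j k (+) H i j k) =
  \big[addb/false]_i \big[addb/false]_j \big[addb/false]_k F i j k (+)
  \big[addb/false]_i \big[addb/false]_j \big[addb/false]_k G i j k (+)
  \big[addb/false]_i \big[addb/false]_j \big[addb/false]_k H i j k.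
Proof.
rewrite -!big_split; apply: eq_bigr => i _; rewrite -!big_split.
by apply: eq_bigr => j _; rewrite -!big_split.
Qed.

Lemma ltn_addb_gtn n (i j : 'I_n) : (i < j)%N (+) (j < i)%N = (i != j).
Proof. by rewrite -val_eqE neq_ltn; case: ltngtP. Qed.

Lemma between_addb (i j m : nat) : (i < j)%N ->
  (j < m)%N (+) ((i < m) && (m < j))%N (+) (m < i)%N = ~~ ((i == m) (+) (j == m)).
Proof. by move=> ij; case: (ltngtP i m) => im; case: (ltngtP j m) => jm //=; lia. Qed.

Section Forms.
Variable n : nat.
Implicit Types (S P : pred 'I_n) (M N : rel 'I_n) (x y z : grade n).

Definition lform S x := \big[addb/false]_i (S i && x i).
Definition bform M x y := \big[addb/false]_i \big[addb/false]_j [&& M i j, x i & y j].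
Definition dotp P x y := bform (fun i j => P i && (i == j)) x y.
Definition lt_on S : rel 'I_n := fun i j => [&& S i, S j & (i < j)%N].
Definition esym2 S x := bform (lt_on S) x x.

Lemma gaddE x y i : gadd x y i = x i (+) y i.
Proof. exact: ffunE. Qed.

Lemma lformD S x y : lform S (gadd x y) = lform S x (+) lform S y.
Proof.
rewrite /lform -big_split; apply: eq_bigr => i _.
by rewrite gaddE; case: (S i) (x i) (y i) => [] [] [].
Qed.

Lemma eq_bform M N x y : M =2 N -> bform M x y = bform N x y.
Proof. by move=> eMN; apply: eq_bigr => i _; apply: eq_bigr => j _; rewrite eMN. Qed.

Lemma bformDl M x y z : bform M (gadd x y) z = bform M x z (+) bform M y z.
Proof.
rewrite /bform -big_split; apply: eq_bigr => i _; rewrite -big_split.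
by apply: eq_bigr => j _; rewrite gaddE; case: (M i j) (x i) (y i) (z j) => [] [] [] [].
Qed.

Lemma bformDr M x y z : bform M x (gadd y z) = bform M x y (+) bform M x z.
Proof.
rewrite /bform -big_split; apply: eq_bigr => i _; rewrite -big_split.
by apply: eq_bigr => j _; rewrite gaddE; case: (M i j) (x i) (y j) (z j) => [] [] [] [].
Qed.

Lemma bform_addb M N x y :
  bform (fun i j => M i j (+) N i j) x y = bform M x y (+) bform N x y.
Proof.
rewrite /bform -big_split; apply: eq_bigr => i _; rewrite -big_split.
by apply: eq_bigr => j _; case: (M i j) (N i j) (x i) (y j) => [] [] [] [].
Qed.

Lemma bform_swap M x y : bform M y x = bform (fun i j => M j i) x y.
Proof.
rewrite /bform exchange_big; apply: eq_bigr => i _; apply: eq_bigr => j _.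
by rewrite [y j && _]andbC.
Qed.

Lemma bform_prod S P x y : bform (fun i j => S i && P j) x y = lform S x && lform P y.
Proof.
rewrite /lform big_distrl; apply: eq_bigr => i _; rewrite big_distrr.
by apply: eq_bigr => j _; case: (S i) (P j) (x i) (y j) => [] [] [] [].
Qed.

Lemma dotpE P x y : dotp P x y = \big[addb/false]_i [&& P i, x i & y i].
Proof.
apply: eq_bigr => i _; rewrite (eq_bigr (fun j => (j == i) && [&& P i, x i & y j])).
  exact: big_addb_pred1.
by move=> j _; rewrite eq_sym; case: (j == i); rewrite ?andbT ?andbF.
Qed.

Lemma dotpC P x y : dotp P x y = dotp P y x.
Proof. by rewrite !dotpE; apply: eq_bigr => i _; rewrite [x i && _]andbC. Qed.

Lemma dotp_diag P x : dotp P x x = lform P x.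
Proof. by rewrite dotpE; apply: eq_bigr => i _; rewrite andbb. Qed.

Lemma dotp_addb P S x y :
  dotp (fun i => P i (+) S i) x y = dotp P x y (+) dotp S x y.
Proof.
rewrite /dotp -bform_addb; apply: eq_bform => i j.
by case: (i == j) (P i) (S i) => [] [] [].
Qed.

Lemma bform_lt_onC S x y :
  bform (lt_on S) x y (+) bform (lt_on S) y x = (lform S x && lform S y) (+) dotp S x y.
Proof.
rewrite [bform _ y x]bform_swap -bform_addb /dotp -bform_prod -bform_addb.
apply: eq_bform => i j.
case: (boolP (i == j)) => [/eqP->|nij].
  by rewrite /lt_on ltnn !andbF; case: (S j).
rewrite !andbF addbF /lt_on; have := ltn_addb_gtn i j; rewrite nij.
by case: (S i) (S j) (i < j)%N (j < i)%N => [] [] [] [].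
Qed.

Lemma esym2D S x y :
  esym2 S (gadd x y) = esym2 S x (+) esym2 S y (+) (lform S x && lform S y) (+) dotp S x y.
Proof.
rewrite /esym2 bformDl !bformDr -[RHS]addbA -bform_lt_onC.
by case: (bform _ x x) (bform _ y y) (bform _ x y) (bform _ y x) => [] [] [] [].
Qed.

End Forms.

Notation wt := (lform predT).
Notation gdot := (dotp predT).
Notation e2 := (esym2 predT).

Section Counting.
Variable n : nat.
Implicit Types (S : pred 'I_n) (x : grade n).

Lemma lform_sum S x : lform S x = odd (\sum_i (S i && x i)).
Proof. by rewrite odd_sum; apply: eq_bigr => i _; rewrite oddb. Qed.

Lemma sum_pairs x :
  \sum_(i < n) \sum_(j < n) [&& (i < j)%N, x i & x j] = 'C(\sum_i x i, 2).
Proof.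
set m := \sum_i x i; set L := \sum_i \sum_j _.
have row (i : 'I_n) : \sum_(j < n) x i * x j =
    \sum_(j < n) [&& (i < j)%N, x i & x j] + \sum_(j < n) [&& (j < i)%N, x i & x j] + x i.
  rewrite -big_split /= (bigD1 i) //= [in RHS](bigD1 i) //= ltnn mulnb andbb addnC.
  congr (_ + _); apply: eq_bigr => j nji.
  case: (ltngtP i j) => [_|_|/val_inj eij]; last by rewrite eij eqxx in nji.
    by case: (x i) (x j) => [] [].
  by case: (x i) (x j) => [] [].
have sq : m * m = L + L + m.
  rewrite big_distrlr /= (eq_bigr _ (fun i _ => row i)) !big_split /=; congr (_ + _ + _).
  rewrite exchange_big; apply: eq_bigr => i _; apply: eq_bigr => j _.
  by case: (x i) (x j) => [] [].
by rewrite bin2 -subn1 mulnBr muln1 sq addnK addnn doubleK.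
Qed.

Lemma e2_sum x : e2 x = odd 'C(\sum_i x i, 2).
Proof.
rewrite -sum_pairs odd_sum; apply: eq_bigr => i _; rewrite odd_sum.
by apply: eq_bigr => j _; rewrite oddb.
Qed.

End Counting.

Definition below n p : pred 'I_n := fun i => (i < p)%N.
Arguments below {n}.

Section CubicCocycle.
Variable n : nat.
Implicit Types (P : pred 'I_n) (x y : grade n).

Definition gmul x y : grade n := [ffun i => x i && y i].
Definition cubic x y := (wt y && e2 x) (+) (~~ wt x && gdot x y).

Lemma wt_gmul x y : wt (gmul x y) = gdot x y.
Proof. by rewrite dotpE; apply: eq_bigr => i _; rewrite ffunE. Qed.

Lemma gdot_gmul x y : gdot (gmul x y) x = gdot x y.
Proof. by rewrite !dotpE; apply: eq_bigr => i _; rewrite ffunE; case: (x i) (y i) => [] []. Qed.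

Lemma xor_triples_by_pairs x y :
  \big[addb/false]_(i < n) \big[addb/false]_(j < n) \big[addb/false]_(k < n)
    (((i < j) && (j < k))%N &&
      ([&& x i, x j & y k] (+) [&& x i, y j & x k] (+) [&& y i, x j & x k]))
  = \big[addb/false]_(a < n) \big[addb/false]_(b < n) \big[addb/false]_(m < n)
    ([&& (a < b)%N, x a, x b & y m] &&
      ((b < m)%N (+) ((a < m) && (m < b))%N (+) (m < a)%N)).
Proof.
under eq_bigr => i _ do under eq_bigr => j _ do under eq_bigr => k _ do rewrite !andb_addr.
under [RHS]eq_bigr => a _ do under eq_bigr => b _ do under eq_bigr => m _ do rewrite !andb_addr.
rewrite !big_addb3_split; congr (_ (+) _ (+) _).
- apply: eq_bigr => a _; apply: eq_bigr => b _; apply: eq_bigr => m _.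
  by case: (a < b)%N (b < m)%N (x a) (x b) (y m) => [] [] [] [] [].
- apply: eq_bigr => a _; rewrite exchange_big; apply: eq_bigr => b _.
  apply: eq_bigr => m _; case: (boolP ((a < m) && (m < b))%N) => [/andP[am mb]|_].
    by rewrite (ltn_trans am mb); case: (x a) (x b) (y m) => [] [] [].
  by rewrite !andbF.
- rewrite exchange_big; apply: eq_bigr => a _; rewrite exchange_big.
  apply: eq_bigr => b _; apply: eq_bigr => m _.
  by case: (a < b)%N (m < a)%N (x a) (x b) (y m) => [] [] [] [] [].
Qed.

Lemma xor_pairs_cubic x y :
  \big[addb/false]_(a < n) \big[addb/false]_(b < n) \big[addb/false]_(m < n)
    ([&& (a < b)%N, x a, x b & y m] &&
      ((b < m)%N (+) ((a < m) && (m < b))%N (+) (m < a)%N))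
  = cubic x y.
Proof.
have off_pair (a b : 'I_n) : (a < b)%N ->
    \big[addb/false]_m (y m && ((b < m)%N (+) ((a < m) && (m < b))%N (+) (m < a)%N)) =
    wt y (+) y a (+) y b.
  move=> ab; rewrite -(big_addb_pred1 a y) -(big_addb_pred1 b y) -!big_split.
  apply: eq_bigr => m _; rewrite between_addb // -!val_eqE /= ![(val m == _)]eq_sym.
  by case: (y m) (val a == val m) (val b == val m) => [] [] [].
have -> : \big[addb/false]_(a < n) \big[addb/false]_(b < n) \big[addb/false]_(m < n)
    ([&& (a < b)%N, x a, x b & y m] &&
      ((b < m)%N (+) ((a < m) && (m < b))%N (+) (m < a)%N)) =
    \big[addb/false]_(a < n) \big[addb/false]_(b < n)
      ([&& (a < b)%N, x a & x b] && (wt y (+) y a (+) y b)).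
  apply: eq_bigr => a _; apply: eq_bigr => b _.
  have [ab|ba] := boolP (a < b)%N; last by rewrite big1.
  rewrite -off_pair // big_distrr; apply: eq_bigr => m _.
  by case: (x a) (x b) (y m) => [] [] [].
rewrite /cubic; have -> : ~~ wt x && gdot x y =
    bform (lt_on predT) (gmul x y) x (+) bform (lt_on predT) x (gmul x y).
  by rewrite bform_lt_onC wt_gmul gdot_gmul; case: (wt x) (gdot x y) => [] [].
rewrite /esym2 /bform big_distrr -!big_split; apply: eq_bigr => a _.
rewrite big_distrr -!big_split; apply: eq_bigr => b _; rewrite !ffunE /lt_on /=.
by case: (a < b)%N (x a) (x b) (y a) (y b) (wt y) => [] [] [] [] [] [].
Qed.

Lemma bform_leqC x y :
  bform (fun i j => (i <= j)%N) y x =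
  bform (fun i j => (i <= j)%N) x y (+) (wt x && wt y) (+) gdot x y.
Proof.
rewrite bform_swap -bform_prod /dotp -!bform_addb; apply: eq_bform => i j /=.
by rewrite -val_eqE /=; case: ltngtP.
Qed.

Lemma bform_leq_diag x : bform (fun i j => (i <= j)%N) x x = e2 x (+) wt x.
Proof.
rewrite /esym2 -dotp_diag /dotp -bform_addb; apply: eq_bform => i j /=.
by rewrite /lt_on -val_eqE /=; case: ltngtP.
Qed.

Definition bilin P x y :=
  bform (fun i j => (i <= j)%N (+) (P i && (i == j))) x y.

Definition cocycle P x y := cubic x y (+) bilin P x y.

Lemma bilinE P x y :
  bilin P x y = bform (fun i j => (i <= j)%N) x y (+) dotp P x y.
Proof. exact: bform_addb. Qed.

Lemma bilinC P x y : bilin P y x = bilin P x y (+) (wt x && wt y) (+) gdot x y.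
Proof.
rewrite !bilinE bform_leqC (dotpC P y).
by case: (bform _ x y) (dotp P x y) (wt x && wt y) (gdot x y) => [] [] [] [].
Qed.

Lemma odd_fcub p x y :
  odd (fcub p x y) = cocycle (below p) x y.
Proof.
rewrite /fcub /cocycle -xor_pairs_cubic -xor_triples_by_pairs bilinE dotpE addbA.
rewrite !oddD !odd_sum; congr (_ (+) _ (+) _); apply: eq_bigr => i _.
- rewrite odd_sum; apply: eq_bigr => j _; rewrite odd_sum; apply: eq_bigr => k _.
  by rewrite oddM !oddD !oddb.
- by rewrite odd_sum; apply: eq_bigr => j _; rewrite oddb.
- by rewrite oddb.
Qed.

End CubicCocycle.

Section TwistedGroupAlgebra.
Local Open Scope ring_scope.
Variables (R : realType) (n : nat).
Implicit Types (c : grade n -> grade n -> bool) (a b : elt R n).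

Definition twisted_mul c a b : elt R n :=
  \sum_(x : grade n) \sum_(y : grade n)
     (((-1) ^+ c x y) * a x * b y) *: ubasis R (gadd x y).

Definition twisted_iso c1 c2 : Prop :=
  exists phi : elt R n -> elt R n,
    [/\ (forall (k : R) (u v : elt R n), phi (k *: u + v) = k *: phi u + phi v),
        bijective phi,
        (forall a b, phi (twisted_mul c1 a b) = twisted_mul c2 (phi a) (phi b)) &
        (forall a, homogeneous a -> homogeneous (phi a))].

Lemma omul_twisted p a b : omul p a b = twisted_mul (cocycle (below p)) a b.
Proof.
apply: eq_bigr => x _; apply: eq_bigr => y _.
by rewrite -odd_fcub signr_odd.
Qed.

Lemma graded_iso_twisted p1 p2 :
  twisted_iso (cocycle (below p1)) (cocycle (below p2)) ->
  graded_iso R n p1 p2.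
Proof.
by case=> phi [lin_phi bij_phi mul_phi hom_phi]; exists phi; split=> // a b;
  rewrite !omul_twisted.
Qed.

Lemma twisted_iso_trans c1 c2 c3 : twisted_iso c1 c2 -> twisted_iso c2 c3 -> twisted_iso c1 c3.
Proof.
move=> [f [fl fb fm fh]] [g [gl gb gm gh]]; exists (g \o f); split => /=.
- by move=> k u v; rewrite fl gl.
- exact: bij_comp.
- by move=> a b; rewrite fm gm.
- by move=> a /fh /gh.
Qed.

Lemma ffunZE (k : R) a z : (k *: a) z = k * a z.
Proof. exact: ffunE. Qed.

Lemma twisted_mulE c a b z :
  twisted_mul c a b z = \sum_x \sum_y ((-1) ^+ c x y * a x * b y) * (z == gadd x y)%:R.
Proof.
rewrite sum_ffunE; apply: eq_bigr => x _; rewrite sum_ffunE.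
by apply: eq_bigr => y _; rewrite ffunZE ffunE.
Qed.

Lemma twisted_iso_coboundary c1 c2 (s : grade n -> grade n) (g : grade n -> bool) :
  involutive s -> {morph s : x y / gadd x y} ->
  (forall x y, c2 (s x) (s y) = c1 x y (+) (g x (+) g y (+) g (gadd x y))) ->
  twisted_iso c1 c2.
Proof.
move=> sK sD cob.
have sgK (b : bool) : (-1) ^+ b * (-1) ^+ b = 1 :> R by rewrite -signr_addb addbb.
(* phi maps u_x to (-1)^(g x) u_(s x). *)
pose phi a : elt R n := [ffun z => (-1) ^+ g (s z) * a (s z)].
pose psi a : elt R n := [ffun z => (-1) ^+ g z * a (s z)].
exists phi; split.
- by move=> k u v; apply/ffunP => z; rewrite !(ffunZE, ffunE); ring.
- by exists psi => a; apply/ffunP => z; rewrite !ffunE sK mulrA sgK mul1r.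
- move=> a b; apply/ffunP => z.
  rewrite ffunE !twisted_mulE [RHS](reindex_inj (inv_inj sK)) /= mulr_sumr.
  apply: eq_bigr => x _; rewrite [RHS](reindex_inj (inv_inj sK)) /= mulr_sumr.
  apply: eq_bigr => y _; rewrite !ffunE !sK -sD -(inv_eq sK).
  case: eqP => [->|_]; last by rewrite !mulr0.
  rewrite cob !signr_addb.
  by case: (g x) (g y) (g (gadd x y)) (c1 x y) => [] [] [] []; rewrite /= ?expr0 ?expr1; ring.
- move=> a [x [k ->]]; exists (s x), ((-1) ^+ g x * k); apply/ffunP => z.
  rewrite !(ffunZE, ffunE) (inv_eq sK); case: eqP => [->|_]; last by rewrite !mulr0.
  by rewrite sK; ring.
Qed.

End TwistedGroupAlgebra.

Section Transvection.
Variables (n : nat) (S : pred 'I_n) (A : grade n).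
Implicit Types (P : pred 'I_n) (M : rel 'I_n) (x y : grade n).

Definition transvection x := if lform S x then gadd x A else x.

Lemma bform_transvection M x y :
  bform M (transvection x) (transvection y) =
  bform M x y (+) (lform S x && bform M A y) (+) (lform S y && bform M x A)
  (+) [&& lform S x, lform S y & bform M A A].
Proof.
rewrite /transvection; case: (lform S x) (lform S y) => [] []; rewrite ?bformDl ?bformDr;
by case: (bform M x y) (bform M A y) (bform M x A) (bform M A A) => [] [] [] [].
Qed.

Lemma dotp_transvection P x y :
  dotp P (transvection x) (transvection y) =
  dotp P x y (+) (lform S x && dotp P A y) (+) (lform S y && dotp P x A)
  (+) [&& lform S x, lform S y & dotp P A A].
Proof. exact: bform_transvection. Qed.

Hypothesis SA : lform S A = false.

Lemma transvectionK : involutive transvection.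
Proof.
move=> x; rewrite {2}/transvection; case: ifP => lx; rewrite /transvection.
  rewrite lformD lx SA /=; apply/ffunP => i; rewrite !ffunE.
  by rewrite -addbA addbb addbF.
by rewrite lx.
Qed.

Lemma transvectionD : {morph transvection : x y / gadd x y}.
Proof.
move=> x y; apply/ffunP => i; rewrite /transvection lformD.
by case: (lform S x) (lform S y) => [] [] /=; rewrite !ffunE; case: (x i) (y i) (A i) => [] [] [].
Qed.

Hypothesis wtA : wt A = false.

Lemma wt_transvection x : wt (transvection x) = wt x.
Proof. by rewrite /transvection; case: ifP; rewrite ?lformD ?wtA ?addbF. Qed.

Lemma e2_transvection x :
  e2 (transvection x) = e2 x (+) (lform S x && (e2 A (+) gdot A x)).
Proof.
rewrite /transvection; case: (lform S x); rewrite ?addbF //.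
by rewrite esym2D wtA andbF addbF (dotpC _ x) addbA.
Qed.

Lemma cubic_transvection x y :
  cubic (transvection x) (transvection y) =
  cubic x y (+) [&& lform S x, wt y & e2 A (+) gdot A x]
  (+) (~~ wt x && ((lform S x && gdot A y) (+) (lform S y && gdot A x))).
Proof.
rewrite /cubic !wt_transvection e2_transvection dotp_transvection dotp_diag wtA.
rewrite (dotpC _ x A) !andbF addbF.
by case: (wt x) (wt y) (e2 x) (gdot x y) (lform S x) (lform S y) (e2 A) (gdot A x) (gdot A y)
  => [] [] [] [] [] [] [] [] [].
Qed.

Variables P1 P2 : pred 'I_n.
Hypothesis P2E : forall i, P2 i = P1 i (+) S i.
Hypothesis P2AA : dotp P2 A A = true.

Definition transvection_form x := gdot A x (+) bilin P2 A x.

Definition transvection_cochain x :=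
  (lform S x && transvection_form x) (+) esym2 S x.

Local Notation lam := transvection_form.
Local Notation g := transvection_cochain.

Lemma transvection_formD x y : lam (gadd x y) = lam x (+) lam y.
Proof.
rewrite /lam /dotp /bilin !bformDr.
by case: (bform _ A x) (bform _ A y) (bform _ A x) (bform _ A y) => [] [] [] [].
Qed.

Lemma transvection_cochain_polar x y :
  g x (+) g y (+) g (gadd x y) =
  [&& lform S x & lform S y] (+) dotp S x y (+) (lform S x && lam y) (+) (lform S y && lam x).
Proof.
rewrite /g lformD transvection_formD esym2D.
by case: (lform S x) (lform S y) (lam x) (lam y)
  (esym2 S x) (esym2 S y) (dotp S x y) => [] [] [] [] [] [] [].
Qed.

Lemma bilin_transvection x y :
  bilin P2 (transvection x) (transvection y) =
  bilin P1 x y (+) dotp S x y (+) (lform S x && (lam y (+) gdot A y))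
  (+) (lform S y && lam x) (+) [&& lform S x, lform S y & ~~ e2 A].
Proof.
have bilinP2 u v : bilin P2 u v = bilin P1 u v (+) dotp S u v.
  rewrite !bilinE -addbA -dotp_addb; congr (_ (+) _).
  by apply: eq_bform => i j; rewrite P2E.
rewrite {1}/bilin bform_transvection -!/(bilin P2 _ _) [bilin P2 x y]bilinP2.
rewrite [bilin P2 x A]bilinC [bilin P2 A A]bilinE bform_leq_diag P2AA wtA /lam.
by case: (bilin P1 x y) (dotp S x y) (lform S x) (lform S y) (gdot A x) (gdot A y)
  (bilin P2 A x) (bilin P2 A y) (e2 A) => [] [] [] [] [] [] [] [] [].
Qed.

(* The only condition on the cubic part; it holds for S = A with e2 A odd and
   for A = (1, ..., 1) with 4 | n. *)
Hypothesis cubicA : forall x y,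
  cubic (transvection x) (transvection y) =
  cubic x y (+) (lform S x && (gdot A y (+) (lform S y && e2 A))).

Lemma cocycle_transvection x y :
  cocycle P2 (transvection x) (transvection y) = cocycle P1 x y (+) (g x (+) g y (+) g (gadd x y)).
Proof.
rewrite /cocycle cubicA bilin_transvection transvection_cochain_polar.
by case: (cubic x y) (bilin P1 x y) (dotp S x y) (lform S x) (lform S y) (lam x) (lam y)
  (gdot A y) (e2 A) => [] [] [] [] [] [] [] [] [].
Qed.

Lemma twisted_iso_transvection (R : realType) : twisted_iso R (cocycle P1) (cocycle P2).
Proof.
exact: twisted_iso_coboundary transvectionK transvectionD cocycle_transvection.
Qed.

End Transvection.

Lemma sum_itv n l r : \sum_(i < n) ((l <= i) && (i < r))%N = minn r n - minn l n.
Proof.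
elim: n => [|n IH]; first by rewrite big_ord0; lia.
by rewrite big_ord_recr /= IH; case: (boolP ((l <= n) && (n < r))%N) => /=; lia.
Qed.

Lemma sum_ord_eq n a : \sum_(i < n) (nat_of_ord i == a) = (a < n)%N.
Proof.
elim: n => [|n IH]; first by rewrite big_ord0.
by rewrite big_ord_recr /= IH; case: ltngtP => /=; lia.
Qed.

Section TransvectionCases.
Variables (R : realType) (n : nat).
Implicit Types (S : pred 'I_n).

Lemma twisted_iso_transvection_self (A : grade n) (P1 P2 : pred 'I_n) :
  wt A = false -> e2 A = true -> lform P2 A = true ->
  (forall i, P2 i = P1 i (+) A i) -> twisted_iso R (cocycle P1) (cocycle P2).
Proof.
move=> wtA e2A P2A P2E.
have lformA x : lform A x = gdot A x by rewrite dotpE.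
apply: (twisted_iso_transvection (S := A) (A := A) _ wtA P2E) => [||x y].
- by rewrite lformA dotp_diag.
- by rewrite dotp_diag.
rewrite cubic_transvection ?lformA ?dotp_diag // e2A.
by case: (gdot A x) (gdot A y) (wt x) (wt y) (cubic x y) => [] [] [] [] [].
Qed.

Lemma twisted_iso_transvection_ones S (P1 P2 : pred 'I_n) :
  (4 %| n)%N -> ~~ odd (\sum_i S i) -> odd (\sum_i P2 i) ->
  (forall i, P2 i = P1 i (+) S i) -> twisted_iso R (cocycle P1) (cocycle P2).
Proof.
move=> /dvdnP[k nE] S_even P2_odd P2E.
pose A : grade n := [ffun=> true].
have lformA P : lform P A = odd (\sum_i P i).
  by rewrite lform_sum; congr (odd _); apply: eq_bigr => i _; rewrite ffunE andbT.
have sumT (P : pred 'I_n) : (forall i, P i) -> \sum_i P i = n.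
  by move=> PT; rewrite (eq_bigr (fun=> 1%N)) ?sum_nat_const ?card_ord ?muln1 // => i _; rewrite PT.
have wtA : wt A = false by rewrite lformA sumT // nE oddM andbF.
have gdotA x : gdot A x = wt x by rewrite dotpE; apply: eq_bigr => i _; rewrite ffunE.
apply: (twisted_iso_transvection (A := A) _ wtA P2E) => [||x y].
- by rewrite lformA (negbTE S_even).
- by rewrite dotp_diag lformA.
have e2A : e2 A = false.
  rewrite e2_sum sumT => [|i]; last by rewrite ffunE.
  have -> : n = (k * 2).*2 by rewrite nE -muln2 -mulnA.
  by rewrite bin2 -doubleMl doubleK !oddM andbF.
rewrite cubic_transvection // !gdotA e2A.
by case: (wt x) (wt y) (lform S x) (lform S y) (cubic x y) => [] [] [] [] [].
Qed.

End TransvectionCases.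

Lemma twisted_iso_shift4 (R : realType) p q : (0 < p)%N -> (5 <= q)%N ->
  twisted_iso R (cocycle (@below (p + q) p)) (cocycle (below (p + 4))).
Proof.
move=> p_gt0 q_ge5; set n := p + q.
pose A1 : grade n := [ffun i : 'I_n => (p.-1 <= i < p + 5)%N].
pose A2 : grade n := [ffun i : 'I_n => (nat_of_ord i == p.-1) || (nat_of_ord i == p + 4)].
have sumA1 : \sum_i A1 i = 6.
  under eq_bigr => i _ do rewrite ffunE.
  by rewrite sum_itv; lia.
have sumA2 : \sum_i A2 i = 2.
  rewrite (eq_bigr (fun i : 'I_n => (nat_of_ord i == p.-1) + (nat_of_ord i == p + 4))%N).
    by rewrite big_split /= !sum_ord_eq; lia.
  by move=> i _; rewrite ffunE; case: eqP; case: eqP => //; lia.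
(* [0, p) -> [0, p-1) \/ [p, p+5) -> [0, p+4) *)
apply: (@twisted_iso_trans _ _ _ (cocycle (fun i => below p i (+) A1 i))).
  apply: twisted_iso_transvection_self => //.
  - by rewrite lform_sum (eq_bigr (fun i => A1 i : nat)) // sumA1.
  - by rewrite e2_sum sumA1.
  rewrite lform_sum (eq_bigr (fun i : 'I_n => (p <= i < p + 5)%N : nat)); last first.
    by move=> i _; rewrite /below ffunE; lia.
  by rewrite sum_itv; have -> : minn (p + 5) n - minn p n = 5 by lia.
apply: twisted_iso_transvection_self => //.
- by rewrite lform_sum (eq_bigr (fun i => A2 i : nat)) // sumA2.
- by rewrite e2_sum sumA2.
- rewrite lform_sum (eq_bigr (fun i : 'I_n => (nat_of_ord i == p.-1) : nat)); last first.
    by move=> i _; rewrite /below ffunE; lia.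
  by rewrite sum_ord_eq; have -> : (p.-1 < n)%N by lia.
by move=> i; rewrite /below !ffunE; lia.
Qed.

Lemma twisted_iso_shift2 (R : realType) p q : (4 %| p + q)%N -> odd p -> (2 <= q)%N ->
  twisted_iso R (cocycle (@below (p + q) p)) (cocycle (below (p + 2))).
Proof.
move=> n4 p_odd q_ge2.
apply: (@twisted_iso_transvection_ones _ _ (fun i => (p <= i < p + 2)%N)) => //.
- by rewrite sum_itv; have -> : minn (p + 2) (p + q) - minn p (p + q) = 2 by lia.
- rewrite (eq_bigr (fun i : 'I_(p + q) => (0 <= i < p + 2)%N : nat)) // sum_itv.
  have -> : minn (p + 2) (p + q) - minn 0 (p + q) = p + 2 by lia.
  by rewrite oddD p_odd.
by move=> i; rewrite /below; lia.
Qed.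

Theorem mainTheorem6 (R : realType) (k p q : nat) :
  (1 <= k)%N -> (p + q = 4 * k)%N ->
  ((~~ odd p -> ~~ odd q -> (2 <= p)%N -> (6 <= q)%N ->
      graded_iso R (p + q) p (p + 4)) /\
   (odd p -> odd q -> (1 <= p)%N -> (3 <= q)%N ->
      graded_iso R (p + q) p (p + 2))).
Proof.
move=> _ pq; split=> [_ _ p_ge2 q_ge6 | p_odd _ _ q_ge3]; apply: graded_iso_twisted.
  by apply: twisted_iso_shift4; lia.
by apply: twisted_iso_shift2; rewrite ?pq ?dvdn_mulr //; lia.
Qed.
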